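(* Let $k$ be a field of characteristic $p>0$, let $n\ge2$ and $d\ge 3$ be integers, and let $V\subseteq k[\beta]$ be a $k$-subspace with $(\beta^n)\subseteq V$ and $\dim_kV/(\beta^n)=d$, such that $V/(\beta^n)$ has a basis given by the classes of polynomials $$p_i=\beta^{\nu_i}+\sum_{j\ge1}p_{i,j}\beta^{\nu_i+j}\quad(i=1,\dots,d,\ p_{i,j}\in k)$$ with $0=\nu_1<1=\nu_2<\nu_3<\cdots<\nu_d$ and $p_{1,1}=0$. Assume $\nu_d\equiv 1\pmod p$, $p_{d,1}-p_{2,1}\ne0$, and that the collection $$\{\nu_d+1\}\cup\{\nu_d+\nu_j-1: j=3,\dots,d\}\cup\{\nu_d+\nu_j+1: j=2,\dots,d\}$$ consists of $2(d-1)$ distinct integers, all smaller than $n$. If $n\neq0$ in $k$, then $\Lambda=kQ/I(n;n,n;V)$ satisfies $\mathrm{HH}^1(\Lambda)=0$.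
   Context: $Q$ is the quiver with vertices $1,2,3$ and arrows $\alpha\colon 2\to1$, $\beta\colon 2\to 2$, $\gamma\colon 3\to 2$; $kQ$ is generated by pairwise orthogonal idempotents $e_1,e_2,e_3$ (sum $1$) and $\alpha,\beta,\gamma$ with $e_1\alpha=\alpha=\alpha e_2$, $e_2\beta=\beta=\beta e_2$, $e_3\gamma=\gamma=\gamma e_2$, $\gamma\alpha=\beta\alpha=\gamma\beta=0$; for $v=\sum_iv_i\beta^i\in k[\beta]$, $\alpha v\gamma=\sum_iv_i\alpha\beta^i\gamma$. $I(n;n,n;V)$ is the two-sided ideal of $kQ$ generated by $\alpha\beta^{n}$, $\beta^n$, $\beta^{n}\gamma$ and all $\alpha v\gamma$, $v\in V$. $\mathrm{HH}^1(\Lambda)=\mathrm{Der}_k(\Lambda,\Lambda)/\mathrm{Inn}(\Lambda)$. *)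

From mathcomp Require Import all_boot all_order all_algebra.
Set Implicit Arguments. Unset Strict Implicit. Unset Printing Implicit Defensive.
Import GRing.Theory.
Local Open Scope ring_scope.

(* The path algebra kQ of the quiver Q: vertices 1,2,3, arrows
   alpha : 2 -> 1, beta : 2 -> 2, gamma : 3 -> 2 (composition written as in
   the paper: e1 alpha = alpha = alpha e2, etc.).  Its paths are
   e1, e3, beta^i (i >= 0, beta^0 = e2), alpha beta^i, beta^i gamma,
   alpha beta^i gamma (i >= 0), so every element of kQ is uniquely
     c1 e1 + c3 e3 + B(beta) + alpha A(beta) + G(beta) gamma + alpha AG(beta) gamma
   with c1, c3 in k and B, A, G, AG in k[beta] (polynomials). *)
Record kQ (k : fieldType) := KQ {
  kq_e1 : k;
  kq_e3 : k;
  kq_B  : {poly k};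
  kq_A  : {poly k};
  kq_G  : {poly k};
  kq_AG : {poly k} }.

Section KQ.
Variable k : fieldType.
Local Notation T := (kQ k).

Definition kq0 : T := KQ 0 0 0 0 0 0.
Definition kq1 : T := KQ 1 1 1 0 0 0.
Definition kq_add (x y : T) : T :=
  KQ (kq_e1 x + kq_e1 y) (kq_e3 x + kq_e3 y) (kq_B x + kq_B y)
     (kq_A x + kq_A y) (kq_G x + kq_G y) (kq_AG x + kq_AG y).
Definition kq_scale (c : k) (x : T) : T :=
  KQ (c * kq_e1 x) (c * kq_e3 x) (c *: kq_B x) (c *: kq_A x) (c *: kq_G x)
     (c *: kq_AG x).
Definition kq_sub (x y : T) : T := kq_add x (kq_scale (-1) y).
Definition kq_mul (x y : T) : T :=
  KQ (kq_e1 x * kq_e1 y)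
     (kq_e3 x * kq_e3 y)
     (kq_B x * kq_B y)
     (kq_e1 x *: kq_A y + kq_A x * kq_B y)
     (kq_B x * kq_G y + kq_e3 y *: kq_G x)
     (kq_e1 x *: kq_AG y + kq_A x * kq_G y + kq_e3 y *: kq_AG x).

Definition kq_e1v : T := KQ 1 0 0 0 0 0.
Definition kq_e2v : T := KQ 0 0 1 0 0 0.
Definition kq_e3v : T := KQ 0 1 0 0 0 0.
Definition kq_alpha : T := KQ 0 0 0 1 0 0.
Definition kq_beta : T := KQ 0 0 'X 0 0 0.
Definition kq_gamma : T := KQ 0 0 0 0 1 0.
Definition kq_poly_beta (v : {poly k}) : T := KQ 0 0 v 0 0 0.
Definition kq_avg (v : {poly k}) : T :=
  kq_mul kq_alpha (kq_mul (kq_poly_beta v) kq_gamma).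

Definition I_gens (n : nat) (V : {poly k} -> Prop) (x : T) : Prop :=
  x = kq_mul kq_alpha (kq_poly_beta 'X^n) \/ x = kq_poly_beta 'X^n \/
  x = kq_mul (kq_poly_beta 'X^n) kq_gamma \/
  exists2 v, V v & x = kq_avg v.

Definition two_sided_ideal (J : T -> Prop) : Prop :=
  [/\ J kq0, (forall x y, J x -> J y -> J (kq_add x y)),
      (forall c x, J x -> J (kq_scale c x)),
      (forall a x, J x -> J (kq_mul a x)) &
      (forall a x, J x -> J (kq_mul x a))].

Definition gen_ideal (S : T -> Prop) (x : T) : Prop :=
  forall J, two_sided_ideal J -> (forall s, S s -> J s) -> J x.

Definition I_nnV (n : nat) (V : {poly k} -> Prop) : T -> Prop :=
  gen_ideal (I_gens n V).

(* Lambda = kQ / I.  A k-linear map Lambda -> Lambda is given by a map on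
   representatives f : kQ -> kQ compatible with congruence mod I. *)
Definition is_derivation_mod (I : T -> Prop) (f : T -> T) : Prop :=
  [/\ (forall x y, I (kq_sub x y) -> I (kq_sub (f x) (f y))),
      (forall c x y, I (kq_sub (f (kq_add (kq_scale c x) y))
                               (kq_add (kq_scale c (f x)) (f y)))) &
      (forall x y, I (kq_sub (f (kq_mul x y))
                             (kq_add (kq_mul (f x) y) (kq_mul x (f y)))))].

Definition is_inner_mod (I : T -> Prop) (f : T -> T) : Prop :=
  exists a, forall x, I (kq_sub (f x) (kq_sub (kq_mul a x) (kq_mul x a))).

Definition HH1_vanishes (I : T -> Prop) : Prop :=
  forall f, is_derivation_mod I f -> is_inner_mod I f.

End KQ.

(* Modulo inner derivations, a derivation f of kQ/I can be normalised so that it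
   kills e1, e2, e3 and alpha, while f(beta) = b(beta) and f(gamma) = h(beta) gamma.
   Applying the Leibniz rule to the relations beta^n and alpha v gamma (v in V) shows
   that b(0) = 0, because n != 0 in k, and that D v := h v + b v' maps V into V.
   Every element of V has its lowest term below beta^n at some beta^(nu_i), so an
   element of V with no terms up to beta^(nu_d) lies in (beta^n).  After subtracting
   a constant from h so that h(0) + b'(0) = 0, this applies to D p_d because nu_d = 1
   in k, and comparing coefficients of D p_d gives h_s + b_(s+1) = 0 inductively.
   A nonzero h_s would place the lowest terms of D p_1 and D p_2 at two exponents
   nu_i, nu_i + 2, the latter with coefficient h_s (p_(d,1) - p_(2,1)), and the
   distinctness of the 2(d-1) integers forbids such a gap.  Hence h is constant and b = 0 modulo beta^n, i.e. f is inner. *)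

From mathcomp Require Import all_boot all_order all_algebra.
From mathcomp Require Import zify ring.
Import GRing.Theory.
Set Implicit Arguments. Unset Strict Implicit. Unset Printing Implicit Defensive.
Local Open Scope ring_scope.

Section ZeroBelow.
Variable R : comNzRingType.
Implicit Types p q : {poly R}.

Definition zero_below (s : nat) p := forall j, (j < s)%N -> p`_j = 0.

Lemma zero_belowW s t p : (t <= s)%N -> zero_below s p -> zero_below t p.
Proof. by move=> hts hp j hj; apply: hp; apply: leq_trans hts. Qed.

Lemma zero_belowS s p : zero_below s p -> p`_s = 0 -> zero_below s.+1 p.
Proof. by move=> hp hs j; rewrite ltnS leq_eqVlt => /predU1P[->|/hp]. Qed.

Lemma zero_below_0 p : zero_below 0 p.
Proof. by []. Qed.

Lemma zero_below0 s : zero_below s (0 : {poly R}).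
Proof. by move=> j _; rewrite coef0. Qed.

Lemma zero_belowD s p q : zero_below s p -> zero_below s q -> zero_below s (p + q).
Proof. by move=> hp hq j hj; rewrite coefD hp ?hq ?addr0. Qed.

Lemma zero_belowZ s (c : R) p : zero_below s p -> zero_below s (c *: p).
Proof. by move=> hp j hj; rewrite coefZ hp ?mulr0. Qed.

Lemma zero_belowM s t p q :
  zero_below s p -> zero_below t q -> zero_below (s + t) (p * q).
Proof.
move=> hp hq m hm; rewrite coefM big1 // => j _.
have [hjs|hjs] := ltnP j s; first by rewrite hp ?mul0r.
by rewrite hq ?mulr0 //; have := ltn_ord j; lia.
Qed.

Lemma zero_belowMl s p q : zero_below s q -> zero_below s (p * q).
Proof. by move=> hq; apply: (@zero_belowM 0). Qed.

Lemma zero_belowMr s p q : zero_below s p -> zero_below s (p * q).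
Proof. by rewrite mulrC; apply: zero_belowMl. Qed.

Lemma zero_below_deriv s p : zero_below s.+1 p -> zero_below s p^`().
Proof. by move=> hp j hj; rewrite coef_deriv hp ?mul0rn. Qed.

Lemma zero_belowXn s : zero_below s ('X^s : {poly R}).
Proof. by move=> j hj; rewrite coefXn (ltn_eqF hj). Qed.

Lemma zero_below_mulXn s p : zero_below s p -> p = drop_poly s p * 'X^s.
Proof.
move=> hp; rewrite -{1}(poly_take_drop s p) [take_poly s p](_ : _ = 0) ?add0r //.
by apply/polyP => i; rewrite coef_take_poly coef0; case: ifP => // /hp.
Qed.

Lemma coefM_zero_below s t m p q : zero_below s p -> zero_below t q ->
  (s + t)%N = m -> (p * q)`_m = p`_s * q`_t.
Proof.
move=> hp hq <-; rewrite coefM (bigD1 (@Ordinal (s + t).+1 s (leq_addr t s))) //= big1 ?addr0.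
  by rewrite addKn.
move=> j /eqP/val_eqP /= hjs; have [hj|hj] := ltnP j s; first by rewrite hp ?mul0r.
by rewrite hq ?mulr0 //; have := ltn_ord j; lia.
Qed.

Lemma coefM_zero_belowS s t m p q : zero_below s p -> zero_below t q ->
  (s + t).+1 = m -> (p * q)`_m = p`_s * q`_t.+1 + p`_s.+1 * q`_t.
Proof.
move=> hp hq <-; rewrite coefM -(big_mkord xpredT (fun j => p`_j * q`_(_ - j))).
rewrite (big_cat_nat (n := s)) //=; last by lia.
rewrite big1_seq ?add0r => [|j]; last first.
  by rewrite mem_index_iota => /andP[_ /andP[_ /hp ->]]; rewrite mul0r.
rewrite big_ltn; last by lia.
rewrite big_ltn; last by lia.
rewrite big1_seq ?addr0 => [|j]; last first.
  by rewrite mem_index_iota => /andP[_ hj]; rewrite hq ?mulr0 //; lia.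
by congr (_ * q`_ _ + _ * q`_ _); lia.
Qed.
End ZeroBelow.

Definition exponent_list (d : nat) (nu : nat -> nat) : seq nat :=
  (nu d + 1)%N :: [seq (nu d + nu j - 1)%N | j <- iota 3 (d - 2)]
    ++ [seq (nu d + nu j + 1)%N | j <- iota 2 (d - 1)].

Lemma exponent_list_bound d (nu : nat -> nat) n : (2 <= d)%N ->
  all (fun m => m < n)%N (exponent_list d nu) -> (2 * nu d + 1 < n)%N.
Proof.
move=> d_ge2 /allP /(_ (nu d + nu d + 1)%N) lt_n.
suff : (nu d + nu d + 1 < n)%N by lia.
apply: lt_n; rewrite inE mem_cat; apply/orP; right; apply/orP; right.
by apply/mapP; exists d => //; rewrite mem_iota; lia.
Qed.

Section Exponents.
Variables (d : nat) (nu : nat -> nat).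
Hypothesis nu1 : nu 1%N = 0%N.
Hypothesis nu2 : nu 2%N = 1%N.
Hypothesis nu_incr : forall i, (2 <= i < d)%N -> (nu i < nu i.+1)%N.

Lemma nu_ltn i j : (1 <= i)%N -> (i < j <= d)%N -> (nu i < nu j)%N.
Proof.
move=> hi /andP[hij hjd].
have nu_homo : {in [pred m | 1 <= m <= d]%N &, {homo nu : m m' / m < m'}}%N.
  apply: (homo_ltn_in ltn_trans) => [m m' | m]; rewrite !inE.
    by move=> /andP[hm _] /andP[_ hm'] l /andP[hml hlm']; rewrite inE; lia.
  move=> /andP[hm _] /andP[_ hmd]; have [->|hm1] := eqVneq m 1%N.
    by rewrite nu1 nu2.
  by apply: nu_incr; lia.
by apply: nu_homo => //; rewrite inE; lia.
Qed.

Lemma nu_le_nu_d i : (1 <= i <= d)%N -> (nu i <= nu d)%N.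
Proof.
move=> /andP[hi hid]; have [->//|hd] := eqVneq i d.
by apply/ltnW/nu_ltn; lia.
Qed.

(* A gap [nu j = nu i + 2] makes two entries of the list collide:
   [nu d + 1 = nu d + nu j - 1] if [i = 1], else [nu d + nu j - 1 = nu d + nu i + 1]. *)
Lemma uniq_exponent_list_gap : uniq (exponent_list d nu) ->
  forall i j, (1 <= i <= d)%N -> (1 <= j <= d)%N -> nu j != (nu i + 2)%N.
Proof.
move=> /= /andP[first_notin]; rewrite cat_uniq => /and3P[_ disjoint _] i j hi hj.
apply/eqP => nu_ij; have j_ge3 : (3 <= j)%N.
  rewrite leqNgt; apply/negP => j_le2; move: nu_ij.
  have [->|->] : j = 1%N \/ j = 2%N by lia.
    by rewrite nu1; lia.
  by rewrite nu2; lia.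
have mem_j : (nu d + nu j - 1)%N \in [seq (nu d + nu j - 1)%N | j <- iota 3 (d - 2)].
  by apply/mapP; exists j => //; rewrite mem_iota; lia.
have [i1|i_ne1] := eqVneq i 1%N.
  move: first_notin; rewrite mem_cat negb_or => /andP[/negP []].
  by rewrite nu_ij i1 nu1 (_ : (nu d + 2 - 1 = nu d + 1)%N) in mem_j; last lia.
have mem_i : (nu d + nu i + 1)%N \in [seq (nu d + nu j + 1)%N | j <- iota 2 (d - 1)].
  by apply/mapP; exists i => //; rewrite mem_iota; lia.
move/hasPn: disjoint => /(_ _ mem_i).
by rewrite (_ : (nu d + nu i + 1 = nu d + nu j - 1)%N) ?mem_j //; lia.
Qed.

End Exponents.

Section LeadingExponents.
Variables (k : fieldType) (n d : nat) (V : {poly k} -> Prop).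
Variables (nu : nat -> nat) (P : nat -> {poly k}).
Hypothesis Vadd : forall u v, V u -> V v -> V (u + v).
Hypothesis Vscale : forall (c : k) v, V v -> V (c *: v).
Hypothesis d_ge2 : (2 <= d)%N.
Hypothesis P_shape : forall i, (1 <= i <= d)%N ->
  zero_below (nu i) (P i) /\ (P i)`_(nu i) = 1.
Hypothesis PV : forall i, (1 <= i <= d)%N -> V (P i).
Hypothesis P_span : forall v, V v -> exists (c : nat -> k) (w : {poly k}),
  v = \sum_(1 <= i < d.+1) c i *: P i + w * 'X^n.
Hypothesis nu1 : nu 1%N = 0%N.
Hypothesis nu2 : nu 2%N = 1%N.
Hypothesis nu_incr : forall i, (2 <= i < d)%N -> (nu i < nu i.+1)%N.
Hypothesis nu_d_lt : (2 * nu d + 1 < n)%N.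

Lemma coef_sum_P (c : nat -> k) i0 m : (1 <= i0 <= d)%N ->
  (forall i, (1 <= i < i0)%N -> c i = 0) -> (m <= nu i0)%N ->
  (\sum_(1 <= i < d.+1) c i *: P i)`_m = c i0 * (P i0)`_m.
Proof.
move=> /andP[hi0 hi0d] hc hm; rewrite coef_sum (big_cat_nat (n := i0)) //=; last by lia.
rewrite big1_seq ?add0r => [|i]; last first.
  by rewrite mem_index_iota => /andP[_ /hc ->]; rewrite coefZ mul0r.
rewrite big_ltn ?coefZ; last by lia.
rewrite big1_seq ?addr0 // => i; rewrite mem_index_iota => /andP[_ /andP[hi hid]].
rewrite coefZ (proj1 (P_shape _)) ?mulr0; first by [].
  by lia.
by apply: leq_ltn_trans hm (nu_ltn nu1 nu2 nu_incr hi0 _); apply/andP; lia.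
Qed.

Lemma V_lowest_exponent w s : V w -> (s < n)%N -> zero_below s w -> w`_s != 0 ->
  exists2 i, (1 <= i <= d)%N & nu i = s.
Proof.
move=> /P_span[c [w' ->]] hsn hlow.
have coef_low m : (m < n)%N -> (\sum_(1 <= i < d.+1) c i *: P i + w' * 'X^n)`_m =
    (\sum_(1 <= i < d.+1) c i *: P i)`_m.
  by move=> hm; rewrite coefD coefMXn hm addr0.
rewrite coef_low //.
have [hex|] := boolP [exists i : 'I_d.+1, (1 <= i)%N && (c i != 0)]; last first.
  rewrite negb_exists => /forallP hc0; rewrite coef_sum big1_seq ?eqxx // => i.
  rewrite mem_index_iota => /andP[_ /andP[hi hid]].
  by have := hc0 (Ordinal hid); rewrite /= hi negbK => /eqP ->; rewrite coefZ mul0r.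
have hex' : exists i, (1 <= i <= d)%N && (c i != 0).
  by case/existsP: hex => i /andP[hi hci]; exists i; rewrite hi hci -ltnS ltn_ord.
case: (ex_minnP hex') => i0 /andP[hi0 hci0] hmin.
have hc i : (1 <= i < i0)%N -> c i = 0.
  move=> /andP[hi hii0]; apply/eqP/negPn/negP => hci.
  by have := hmin i; rewrite hi hci (leq_trans (ltnW hii0)) ?(andP hi0).2 // => /(_ isT); lia.
move=> hs; exists i0 => //; have [hlt|hgt|//] := ltngtP (nu i0) s.
- move: hci0; have := hlow _ hlt; rewrite coef_low ?(ltn_trans hlt hsn) //.
  by rewrite (coef_sum_P hi0 hc) // (proj2 (P_shape hi0)) mulr1 => ->; rewrite eqxx.
- move: hs; rewrite (coef_sum_P hi0 hc) ?(ltnW hgt) //.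
  by rewrite (proj1 (P_shape hi0)) // mulr0 eqxx.
Qed.

Lemma V_zero_below_n w s : V w -> zero_below s w -> (nu d < s)%N -> zero_below n w.
Proof.
move=> Vw hs hds m hm; apply/eqP/negPn/negP => hnz.
have hex : exists m, (m < n)%N && (w`_m != 0) by exists m; rewrite hm hnz.
case: (ex_minnP hex) => m0 /andP[hm0 hnz0] hmin.
have hlow : zero_below m0 w.
  move=> j hj; apply/eqP/negPn/negP => hj0.
  by have := hmin j; rewrite hj0 (ltn_trans hj hm0) => /(_ isT); lia.
have [i hi him0] := V_lowest_exponent Vw hm0 hlow hnz0.
by move: hnz0; rewrite -him0 hs ?eqxx //; apply: leq_ltn_trans (nu_le_nu_d nu1 nu2 nu_incr hi) hds.
Qed.

Hypothesis nu_d1 : (nu d)%:R = 1 :> k.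
Hypothesis Pd_P2 : (P d)`_(nu d).+1 != (P 2%N)`_2.
Hypothesis nu_gap : forall i j, (1 <= i <= d)%N -> (1 <= j <= d)%N ->
  nu j != (nu i + 2)%N.

Section BalancedData.
Variables h b : {poly k}.
Let D v := h * v + b * v^`().
Hypothesis D_stable : forall v, V v -> V (D v).
Hypothesis b0 : b`_0 = 0.
Hypothesis hb_balanced : h`_0 + b`_1 = 0.

Let one_in : (1 <= 1 <= d)%N. Proof. by apply/andP; split=> //; apply: ltnW. Qed.
Let two_in : (1 <= 2 <= d)%N. Proof. exact/andP. Qed.
Let d_in : (1 <= d <= d)%N. Proof. by rewrite leqnn andbT ltnW. Qed.
Let nu_d_gt0 : (0 < nu d)%N. Proof. by rewrite -nu2 (nu_le_nu_d nu1 nu2 nu_incr). Qed.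
Let q := (P d)`_(nu d).+1.
Let r := (P 2%N)`_2.

Let P2_low : zero_below 1 (P 2%N). Proof. by case: (P_shape two_in); rewrite nu2. Qed.
Let P2_1 : (P 2%N)`_1 = 1. Proof. by case: (P_shape two_in); rewrite nu2. Qed.
Let P2'_0 : (P 2%N)^`()`_0 = 1. Proof. by rewrite coef_deriv P2_1. Qed.
Let P2'_1 : (P 2%N)^`()`_1 = r *+ 2. Proof. by rewrite coef_deriv. Qed.
Let Pd_low : zero_below (nu d) (P d). Proof. by case: (P_shape d_in). Qed.
Let Pd_nu : (P d)`_(nu d) = 1. Proof. by case: (P_shape d_in). Qed.
Let Pd'_low : zero_below (nu d).-1 (P d)^`().
Proof. by apply: zero_below_deriv; rewrite prednK. Qed.
Let Pd'_nu : (P d)^`()`_(nu d).-1 = 1.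
Proof. by rewrite coef_deriv prednK // Pd_nu. Qed.
Let Pd'_nuS : (P d)^`()`_(nu d) = q *+ 2.
Proof.
by rewrite coef_deriv mulrSr -mulr_natr nu_d1 mulr1 mulr2n.
Qed.

Lemma D_Pd_zero_below_n : zero_below n (D (P d)).
Proof.
apply: (V_zero_below_n (D_stable (PV d_in)) _ (ltnSn _)); apply: zero_belowS.
  apply: zero_belowD; first exact: zero_belowMl.
  by rewrite -[nu d](prednK nu_d_gt0) -add1n; apply: zero_belowM => // [[]].
rewrite coefD (coefM_zero_below (zero_below_0 h) Pd_low) // Pd_nu mulr1.
have b_low : zero_below 1 b by case.
by rewrite (coefM_zero_below b_low Pd'_low) ?Pd'_nu ?mulr1 // add1n prednK.
Qed.

Lemma coef_D_Pd s : zero_below s h -> zero_below s.+1 b ->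
  (D (P d))`_(nu d + s) = h`_s + b`_s.+1.
Proof.
move=> hh hb; rewrite coefD (coefM_zero_below hh Pd_low) ?(addnC s) // Pd_nu mulr1.
by rewrite (coefM_zero_below hb Pd'_low) ?Pd'_nu ?mulr1 //; lia.
Qed.

Lemma coef_D_PdS s : zero_below s h -> zero_below s.+1 b ->
  (D (P d))`_(nu d + s).+1 = h`_s * q + h`_s.+1 + (b`_s.+1 * (q *+ 2) + b`_s.+2).
Proof.
move=> hh hb; rewrite coefD (coefM_zero_belowS hh Pd_low) ?(addnC s) // Pd_nu mulr1.
rewrite (coefM_zero_belowS hb Pd'_low); last by lia.
by rewrite prednK // Pd'_nuS Pd'_nu mulr1.
Qed.

Lemma D_P2_low s : zero_below s h -> zero_below s.+1 b ->
  zero_below s.+1 (D (P 2%N)) /\ (D (P 2%N))`_s.+1 = h`_s + b`_s.+1.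
Proof.
move=> hh hb; split.
  apply: zero_belowD; first by rewrite -addn1; apply: zero_belowM.
  by rewrite -[s.+1]addn0; apply: zero_belowM.
rewrite coefD (coefM_zero_below hh P2_low) ?addn1 // P2_1 mulr1.
by rewrite (coefM_zero_below hb (zero_below_0 _)) ?P2'_0 ?mulr1 ?addn0.
Qed.

Lemma coef_D_P2S s : zero_below s h -> zero_below s.+1 b ->
  (D (P 2%N))`_s.+2 = h`_s * r + h`_s.+1 + (b`_s.+1 * (r *+ 2) + b`_s.+2).
Proof.
move=> hh hb; rewrite coefD (coefM_zero_belowS hh P2_low) ?addn1 // P2_1 mulr1.
by rewrite (coefM_zero_belowS hb (zero_below_0 _)) ?addn0 // P2'_1 P2'_0 mulr1.
Qed.

Lemma D_P1_low s : zero_below s h -> zero_below s.+1 b ->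
  zero_below s (D (P 1%N)) /\ (D (P 1%N))`_s = h`_s.
Proof.
have [P1_low P1_0] := P_shape one_in; rewrite nu1 in P1_low P1_0.
move=> hh hb; have bP1' : zero_below s.+1 (b * (P 1%N)^`()) by apply: zero_belowMr.
split; first by apply: zero_belowD; [apply: zero_belowMr | apply: zero_belowW bP1'].
by rewrite coefD (coefM_zero_below hh P1_low) ?addn0 // P1_0 mulr1 bP1' ?addr0.
Qed.

(* A nonzero [h_s] makes [s] and [s + 2] exponents [nu i], [nu j]: the lowest terms of
   [D p_1] and of [D p_2], the latter with coefficient [h_s (q - r)]. *)
Lemma h_coef_eq0 s : (s < n)%N -> zero_below s h -> zero_below s.+1 b -> h`_s = 0.
Proof.
move=> hsn hh hb; apply/eqP/negPn/negP => hs0.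
have [DP1_low DP1_s] := D_P1_low hh hb.
have [i hi nu_i] : exists2 i, (1 <= i <= d)%N & nu i = s.
  by apply: (V_lowest_exponent (D_stable (PV one_in))) hsn DP1_low _; rewrite DP1_s.
have s_le : (s <= nu d)%N by rewrite -nu_i (nu_le_nu_d nu1 nu2 nu_incr).
have E1 : h`_s + b`_s.+1 = 0.
  by rewrite -coef_D_Pd // D_Pd_zero_below_n //; lia.
have E2 : h`_s * q + h`_s.+1 + (b`_s.+1 * (q *+ 2) + b`_s.+2) = 0.
  by rewrite -coef_D_PdS // D_Pd_zero_below_n //; lia.
have eb1 : b`_s.+1 = - h`_s by apply/eqP; rewrite -addr_eq0 addrC E1.
have eb2 : b`_s.+2 = h`_s * q - h`_s.+1.
  by apply/eqP; rewrite -subr_eq0 -[X in _ == X]E2 eb1; apply/eqP; ring.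
have [DP2_low DP2_s1] := D_P2_low hh hb.
have [j hj nu_j] : exists2 j, (1 <= j <= d)%N & nu j = s.+2.
  apply: (V_lowest_exponent (D_stable (PV two_in))); first by lia.
    by apply: zero_belowS; rewrite // DP2_s1 E1.
  rewrite coef_D_P2S // eb2 eb1 (_ : _ + _ = h`_s * (q - r)); last by ring.
  by rewrite mulf_neq0 // subr_eq0.
by move/eqP: (nu_gap hi hj); rewrite nu_j nu_i addn2.
Qed.

Lemma b_coef_eq0 s : (s < n)%N -> zero_below s h -> zero_below s b -> b`_s = 0.
Proof.
case: s => [|s] hsn hh hb; first exact: b0.
have [DP2_low DP2_s1] := D_P2_low (zero_belowW (leqnSn s) hh) hb.
rewrite (hh s (ltnSn s)) add0r in DP2_s1.
have [s_lt|s_ge] := ltnP (nu d + s) n.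
  have := D_Pd_zero_below_n s_lt.
  by rewrite coef_D_Pd ?(hh s (ltnSn s)) ?add0r //; apply: zero_belowW hh.
apply/eqP/negPn/negP => hs0.
have [j hj nu_j] : exists2 j, (1 <= j <= d)%N & nu j = s.+1.
  by apply: (V_lowest_exponent (D_stable (PV two_in))) hsn DP2_low _; rewrite DP2_s1.
by have := nu_le_nu_d nu1 nu2 nu_incr hj; lia.
Qed.

Lemma balanced_zero_below_n : zero_below n h /\ zero_below n b.
Proof.
suff H s : (s <= n)%N -> zero_below s h /\ zero_below s b by apply: H.
elim: s => [|s IH] hs; first by [].
have [hh hb] := IH (ltnW hs).
have hbs := zero_belowS hb (b_coef_eq0 hs hh hb).
by split; first apply: zero_belowS hh (h_coef_eq0 hs hh hbs).
Qed.

End BalancedData.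

Lemma stable_operator_scalar h b :
  (forall v, V v -> V (h * v + b * v^`())) -> b`_0 = 0 ->
  exists c : k, zero_below n (h - c%:P) /\ zero_below n b.
Proof.
move=> hV b0; exists (h`_0 + b`_1).
apply: (@balanced_zero_below_n (h - _%:P)) => //; last first.
  by rewrite coefB coefC /=; ring.
move=> v Vv; rewrite (_ : _ + _ = h * v + b * v^`() + (- (h`_0 + b`_1)) *: v).
  by apply: Vadd; [apply: hV | apply: Vscale].
by rewrite -mul_polyC polyCN; ring.
Qed.
End LeadingExponents.

Lemma kq_ext (k : fieldType) (x y : kQ k) :
  kq_e1 x = kq_e1 y -> kq_e3 x = kq_e3 y -> kq_B x = kq_B y ->
  kq_A x = kq_A y -> kq_G x = kq_G y -> kq_AG x = kq_AG y -> x = y.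
Proof. by case: x; case: y => /= ?????? ?????? -> -> -> -> -> ->. Qed.

Ltac poly_ring :=
  rewrite -?mul_polyC ?(polyCM, polyCD, polyCN, polyCB, polyC1, polyC0); ring.
Ltac kq_ring := apply: kq_ext => /=; poly_ring.

Lemma gen_ideal_ideal (k : fieldType) (S : kQ k -> Prop) :
  two_sided_ideal (gen_ideal S).
Proof.
split=> [J [] // | x y hx hy J hJ hS | c x hx J hJ hS | a x hx J hJ hS | a x hx J hJ hS];
  case: (hJ) => _ hD hZ hMl hMr.
- by apply: hD; [apply: hx | apply: hy].
- by apply: hZ; apply: hx.
- by apply: hMl; apply: hx.
- by apply: hMr; apply: hx.
Qed.

Definition kq_bracket (k : fieldType) (a x : kQ k) : kQ k :=
  kq_sub (kq_mul a x) (kq_mul x a).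

Section QuotientByI.
Variables (k : fieldType) (n : nat) (V : {poly k} -> Prop).
Hypothesis Vadd : forall u v, V u -> V v -> V (u + v).
Hypothesis Vscale : forall (c : k) v, V v -> V (c *: v).
Hypothesis VXn : forall w, V (w * 'X^n).
Local Notation T := (kQ k).

Lemma V0 : V 0.
Proof. by rewrite -(mul0r 'X^n). Qed.

Lemma V_of_zero_below p : zero_below n p -> V p.
Proof. by move/zero_below_mulXn ->. Qed.

(* I(n;n,n;V) in coordinates: it is spanned by the paths through beta^n and by alpha V gamma. *)
Inductive in_I (x : T) : Prop :=
  InI of kq_e1 x = 0 & kq_e3 x = 0 & zero_below n (kq_B x) &
    zero_below n (kq_A x) & zero_below n (kq_G x) & V (kq_AG x).

Lemma in_I_eq x y : x = y -> in_I y -> in_I x.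
Proof. by move->. Qed.

Lemma in_I0 : in_I (kq0 k).
Proof. by split=> //=; first [exact: zero_below0 | exact: V0]. Qed.

Lemma in_ID x y : in_I x -> in_I y -> in_I (kq_add x y).
Proof.
case=> x1 x3 xB xA xG xAG [y1 y3 yB yA yG yAG]; split=> /=.
- by rewrite x1 y1 addr0.
- by rewrite x3 y3 addr0.
- exact: zero_belowD.
- exact: zero_belowD.
- exact: zero_belowD.
- exact: Vadd.
Qed.

Lemma in_IZ c x : in_I x -> in_I (kq_scale c x).
Proof.
case=> x1 x3 xB xA xG xAG; split=> /=.
- by rewrite x1 mulr0.
- by rewrite x3 mulr0.
- exact: zero_belowZ.
- exact: zero_belowZ.
- exact: zero_belowZ.
- exact: Vscale.
Qed.

Lemma in_IB x y : in_I x -> in_I y -> in_I (kq_sub x y).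
Proof. by move=> hx hy; apply: in_ID => //; apply: in_IZ. Qed.

Lemma in_IMl a x : in_I x -> in_I (kq_mul a x).
Proof.
case=> x1 x3 xB xA xG xAG; split=> /=.
- by rewrite x1 mulr0.
- by rewrite x3 mulr0.
- exact: zero_belowMl.
- by apply: zero_belowD; [apply: zero_belowZ | apply: zero_belowMl].
- by rewrite x3 scale0r addr0; apply: zero_belowMl.
- rewrite x3 scale0r addr0; apply: Vadd; first exact: Vscale.
  by apply/V_of_zero_below/zero_belowMl.
Qed.

Lemma in_IMr a x : in_I x -> in_I (kq_mul x a).
Proof.
case=> x1 x3 xB xA xG xAG; split=> /=.
- by rewrite x1 mul0r.
- by rewrite x3 mul0r.
- exact: zero_belowMr.
- by rewrite x1 scale0r add0r; apply: zero_belowMr.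
- by apply: zero_belowD; [apply: zero_belowMr | apply: zero_belowZ].
- rewrite x1 scale0r add0r; apply: Vadd; last exact: Vscale.
  by apply/V_of_zero_below/zero_belowMr.
Qed.

Lemma in_I_ideal : two_sided_ideal in_I.
Proof. by split; [exact: in_I0 | exact: in_ID | exact: in_IZ | exact: in_IMl | exact: in_IMr]. Qed.

Lemma I_gens_in_I x : I_gens n V x -> in_I x.
Proof.
have Xn_low := @zero_belowXn k n.
case=> [->|[->|[->|[v Vv ->]]]]; split;
  rewrite /= ?(scale0r, scaler0, add0r, addr0, mul1r, mul0r, mulr1, mulr0) //;
  exact: zero_below0 || exact: V0.
Qed.

Lemma I_nnVP x : I_nnV n V x <-> in_I x.
Proof.
split=> [hx | [x1 x3 xB xA xG xAG]]; first exact: hx in_I_ideal I_gens_in_I.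
have [_ hD _ hMl hMr] := gen_ideal_ideal (I_gens n V).
have gen s : I_gens n V s -> I_nnV n V s by move=> hs J _; apply.
have -> : x = kq_add (kq_add (kq_add
    (kq_mul (kq_poly_beta (drop_poly n (kq_B x))) (kq_poly_beta 'X^n))
    (kq_mul (kq_mul (kq_alpha k) (kq_poly_beta 'X^n)) (kq_poly_beta (drop_poly n (kq_A x)))))
    (kq_mul (kq_poly_beta (drop_poly n (kq_G x))) (kq_mul (kq_poly_beta 'X^n) (kq_gamma k))))
    (kq_avg (kq_AG x)).
  apply: kq_ext; rewrite /= ?(scale0r, scaler0, add0r, addr0, mul1r, mul0r, mulr1, mulr0) //.
  - exact: zero_below_mulXn.
  - by rewrite mulrC; apply: zero_below_mulXn.
  - exact: zero_below_mulXn.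
apply: (hD); last by apply: gen; right; right; right; exists (kq_AG x).
apply: (hD); last by apply: (hMl); apply: gen; right; right; left.
apply: (hD); last by apply: (hMr); apply: gen; left.
by apply: (hMl); apply: gen; right; left.
Qed.

Local Notation e1 := (kq_e1v k).
Local Notation e2 := (kq_e2v k).
Local Notation e3 := (kq_e3v k).
Local Notation alpha := (kq_alpha k).
Local Notation beta := (kq_beta k).
Local Notation gamma := (kq_gamma k).

Lemma derivation_mod_in_I f :
  is_derivation_mod (I_nnV n V) f -> is_derivation_mod in_I f.
Proof.
have memP x := I_nnVP x.
case=> hc hl hm; split=> [x y /memP/hc/memP // | c x y | x y]; apply/memP.
  exact: hl.
exact: hm.
Qed.

Lemma derivation_sub_inner f a : is_derivation_mod in_I f ->
  is_derivation_mod in_I (fun x => kq_sub (f x) (kq_bracket a x)).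
Proof.
case=> hc hl hm; split=> [x y hxy | c x y | x y].
- apply: (in_I_eq (y := kq_sub (kq_sub (f x) (f y)) (kq_bracket a (kq_sub x y)))).
    by rewrite /kq_bracket; kq_ring.
  apply: in_IB => //; first exact: hc.
  by apply: in_IB => //; [apply: in_IMl | apply: in_IMr].
- apply: in_I_eq (hl c x y); by rewrite /kq_bracket; kq_ring.
- apply: in_I_eq (hm x y); by rewrite /kq_bracket; kq_ring.
Qed.

Section Derivation.
Variable g : T -> T.
Hypothesis dg : is_derivation_mod in_I g.

Lemma der_compat x y : in_I (kq_sub x y) -> in_I (kq_sub (g x) (g y)).
Proof. by case: dg => h _ _; apply: h. Qed.

Lemma der_leibniz x y z : kq_mul x y = z ->
  in_I (kq_sub (g z) (kq_add (kq_mul (g x) y) (kq_mul x (g y)))).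
Proof. by case: dg => _ _ h <-; apply: h. Qed.

Lemma der0 : in_I (g (kq0 k)).
Proof.
have := der_leibniz (x := kq0 k) (y := kq0 k) (z := kq0 k) ltac:(kq_ring).
by apply: in_I_eq; kq_ring.
Qed.

Lemma der_leibniz0 x y : kq_mul x y = kq0 k ->
  in_I (kq_add (kq_mul (g x) y) (kq_mul x (g y))).
Proof.
move=> /der_leibniz h.
apply: (in_I_eq (y := kq_sub (g (kq0 k)) (kq_sub (g (kq0 k))
  (kq_add (kq_mul (g x) y) (kq_mul x (g y)))))); first by kq_ring.
exact: in_IB der0 h.
Qed.

Lemma derD x y : in_I (kq_sub (g (kq_add x y)) (kq_add (g x) (g y))).
Proof.
case: dg => _ hl _; apply: in_I_eq (hl 1 x y).
by rewrite (_ : kq_add (kq_scale 1 x) y = kq_add x y); kq_ring.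
Qed.

Lemma derZ c x : in_I (kq_sub (g (kq_scale c x)) (kq_scale c (g x))).
Proof.
case: dg => _ hl _; have := hl c x (kq0 k).
rewrite (_ : kq_add (kq_scale c x) (kq0 k) = kq_scale c x); last by kq_ring.
move=> h; apply: (in_I_eq (y := kq_add (kq_sub (g (kq_scale c x))
  (kq_add (kq_scale c (g x)) (g (kq0 k)))) (g (kq0 k)))); first by kq_ring.
exact: in_ID h der0.
Qed.

Lemma der_in_I x : in_I x -> in_I (g x).
Proof.
move=> hx; have := der_compat (x := x) (y := kq0 k).
rewrite (_ : kq_sub x (kq0 k) = x); last by kq_ring.
move=> /(_ hx) h; apply: (in_I_eq (y := kq_add (kq_sub (g x) (g (kq0 k))) (g (kq0 k)))).
  by kq_ring.
exact: in_ID h der0.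
Qed.

Lemma der_in_I_generators : in_I (g e1) -> in_I (g e2) -> in_I (g e3) ->
  in_I (g alpha) -> in_I (g beta) -> in_I (g gamma) -> forall x, in_I (g x).
Proof.
move=> H1 H2 H3 Ha Hb Hc.
have SD x y : in_I (g x) -> in_I (g y) -> in_I (g (kq_add x y)).
  move=> hx hy; apply: (in_I_eq (y := kq_add (kq_sub (g (kq_add x y))
     (kq_add (g x) (g y))) (kq_add (g x) (g y)))); first by kq_ring.
  by apply: in_ID => //; [apply: derD | apply: in_ID].
have SZ c x : in_I (g x) -> in_I (g (kq_scale c x)).
  move=> hx; apply: (in_I_eq (y := kq_add (kq_sub (g (kq_scale c x))
     (kq_scale c (g x))) (kq_scale c (g x)))); first by kq_ring.
  by apply: in_ID => //; [apply: derZ | apply: in_IZ].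
have SM x y : in_I (g x) -> in_I (g y) -> in_I (g (kq_mul x y)).
  move=> hx hy; have L := der_leibniz (x := x) (y := y) erefl.
  apply: (in_I_eq (y := kq_add (kq_sub (g (kq_mul x y))
     (kq_add (kq_mul (g x) y) (kq_mul x (g y))))
     (kq_add (kq_mul (g x) y) (kq_mul x (g y))))); first by kq_ring.
  by apply: in_ID L _; apply: in_ID; [apply: in_IMr | apply: in_IMl].
have Sbeta p : in_I (g (kq_poly_beta p)).
  elim/poly_ind: p => [|p c IH].
    by rewrite (_ : kq_poly_beta 0 = kq0 k); [exact: der0 | kq_ring].
  rewrite (_ : kq_poly_beta _ = kq_add (kq_mul (kq_poly_beta p) beta) (kq_scale c e2)).
    by apply: SD; [apply: SM | apply: SZ].
  by kq_ring.
move=> x; have -> : x = kq_add (kq_add (kq_add (kq_add (kq_add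
  (kq_scale (kq_e1 x) e1) (kq_scale (kq_e3 x) e3)) (kq_poly_beta (kq_B x)))
  (kq_mul alpha (kq_poly_beta (kq_A x)))) (kq_mul (kq_poly_beta (kq_G x)) gamma))
  (kq_mul alpha (kq_mul (kq_poly_beta (kq_AG x)) gamma)) by kq_ring.
by repeat first [apply: (SD) | apply: (SZ) | apply: (SM) | apply: (Sbeta) | assumption].
Qed.

Section NormalForm.
Variables b h : {poly k}.
Hypothesis g_e2 : in_I (g e2).
Hypothesis g_alpha : in_I (g alpha).
Hypothesis g_beta : in_I (kq_sub (g beta) (kq_poly_beta b)).
Hypothesis g_gamma : in_I (kq_sub (g gamma) (KQ 0 0 0 0 h 0)).

Lemma der_poly_beta v :
  in_I (kq_sub (g (kq_poly_beta v)) (kq_poly_beta (v^`() * b))).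
Proof.
elim/poly_ind: v => [|p c IH].
  rewrite deriv0 mul0r; apply: in_I_eq der0; kq_ring.
have -> : kq_poly_beta (p * 'X + c%:P) =
    kq_add (kq_mul (kq_poly_beta p) beta) (kq_scale c e2) by kq_ring.
rewrite derivD derivC derivM derivX addr0 mulr1.
set u := kq_mul (kq_poly_beta p) beta; set w := kq_scale c e2.
apply: (in_I_eq (y := kq_add (kq_add (kq_add (kq_add (kq_add
   (kq_sub (g (kq_add u w)) (kq_add (g u) (g w)))
   (kq_sub (g w) (kq_scale c (g e2))))
   (kq_scale c (g e2)))
   (kq_sub (g u) (kq_add (kq_mul (g (kq_poly_beta p)) beta)
     (kq_mul (kq_poly_beta p) (g beta)))))
   (kq_mul (kq_sub (g (kq_poly_beta p)) (kq_poly_beta (p^`() * b))) beta))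
   (kq_mul (kq_poly_beta p) (kq_sub (g beta) (kq_poly_beta b))))).
  by rewrite /u /w; kq_ring.
apply: in_ID; last exact: in_IMl.
apply: in_ID; last exact: in_IMr.
apply: in_ID; last exact: der_leibniz.
apply: in_ID; last exact: in_IZ.
by apply: in_ID; [apply: derD | apply: derZ].
Qed.

Lemma der_V_stable v : V v -> V (h * v + b * v^`()).
Proof.
move=> Vv; set H := KQ 0 0 0 0 h 0 : T.
set E := kq_mul alpha (kq_add (kq_mul (kq_poly_beta (v^`() * b)) gamma)
   (kq_mul (kq_poly_beta v) H)).
have g_avg : in_I (g (kq_avg v)).
  by apply/der_in_I/I_gens_in_I; right; right; right; exists v.
have hE : in_I (kq_sub (g (kq_avg v)) E).
  apply: (in_I_eq (y := kq_add (kq_add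
    (kq_sub (g (kq_avg v)) (kq_add (kq_mul (g alpha) (kq_mul (kq_poly_beta v) gamma))
       (kq_mul alpha (g (kq_mul (kq_poly_beta v) gamma)))))
    (kq_mul (g alpha) (kq_mul (kq_poly_beta v) gamma)))
    (kq_mul alpha (kq_add (kq_add
      (kq_sub (g (kq_mul (kq_poly_beta v) gamma))
         (kq_add (kq_mul (g (kq_poly_beta v)) gamma) (kq_mul (kq_poly_beta v) (g gamma))))
      (kq_mul (kq_sub (g (kq_poly_beta v)) (kq_poly_beta (v^`() * b))) gamma))
      (kq_mul (kq_poly_beta v) (kq_sub (g gamma) H)))))).
    by rewrite /E /H; kq_ring.
  apply: in_ID; last first.
    apply: in_IMl; apply: in_ID; last exact: in_IMl.
    by apply: in_ID; [apply: der_leibniz | apply: in_IMr; apply: der_poly_beta].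
  by apply: in_ID; [apply: der_leibniz | apply: in_IMr].
have [_ _ _ _ _ /=] : in_I E.
  apply: (in_I_eq (y := kq_sub (g (kq_avg v)) (kq_sub (g (kq_avg v)) E))).
    by kq_ring.
  exact: in_IB.
by rewrite !(scale0r, scaler0, mul0r, mul1r, mulr1, add0r, addr0) addrC mulrC [b * _]mulrC.
Qed.

Lemma der_beta_coef0 : (n%:R : k) != 0 -> b`_0 = 0.
Proof.
move=> n_neq0; have n_gt0 : (0 < n)%N by case: n n_neq0 => //; rewrite eqxx.
have Xn_in_I : in_I (kq_poly_beta 'X^n).
  split=> //=; [exact: zero_belowXn | exact: zero_below0 | exact: zero_below0 | exact: V0].
have [_ _ /= Xn'b _ _ _] : in_I (kq_poly_beta ('X^n^`() * b)).
  apply: (in_I_eq (y := kq_sub (g (kq_poly_beta 'X^n))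
    (kq_sub (g (kq_poly_beta 'X^n)) (kq_poly_beta ('X^n^`() * b))))); first by kq_ring.
  by apply: in_IB; [apply: der_in_I | apply: der_poly_beta].
have := Xn'b n.-1; rewrite ltn_predL => /(_ n_gt0).
rewrite derivXn mulrnAl coefMn coefXnM ltnn subnn => /eqP.
by rewrite -mulr_natr mulf_eq0 (negPf n_neq0) orbF => /eqP.
Qed.

End NormalForm.
End Derivation.

Lemma eq0_scale (u x c : k) : u = 0 -> x = c * u -> x = 0.
Proof. by move=> -> ->; rewrite mulr0. Qed.

Lemma zero_below_comb (u v x a b : {poly k}) :
  zero_below n u -> zero_below n v -> x = a * u + b * v -> zero_below n x.
Proof. by move=> hu hv ->; apply: zero_belowD; apply: zero_belowMl. Qed.

Lemma V_comb (u w x : {poly k}) (c : k) :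
  V u -> zero_below n w -> x = c *: u + w -> V x.
Proof. by move=> hu hw ->; apply: Vadd; [apply: Vscale | apply: V_of_zero_below]. Qed.

(* Each coordinate of a normalized derivation is [+-1] times a coordinate of
   one Leibniz relation, possibly plus ['X] times a coordinate of a second one. *)
Ltac coord2 H W :=
  first [ apply: (eq0_scale (c := 1) H); ring
        | apply: (eq0_scale (c := -1) H); ring
        | apply: (zero_below_comb (a := 1) (b := 'X) H W); poly_ring
        | apply: (zero_below_comb (a := -1) (b := - 'X) H W); poly_ring
        | apply: (V_comb (c := 1) H W); poly_ring
        | apply: (V_comb (c := -1) H W); poly_ring ].
Ltac coord H := coord2 H (@zero_below0 k n).
Ltac coord0 := first [coord (@zero_below0 k n) | coord V0].

Section Normalization.
Variable f : T -> T.
Hypothesis df : is_derivation_mod in_I f.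

(* Subtracting [[normalizer, -]] makes [f] vanish modulo I on [e1], [e2], [e3], [alpha]. *)
Definition normalizer : T :=
  KQ 0 0 (- kq_A (f alpha)) (- kq_A (f e1)) (kq_G (f e3)) (- kq_AG (f e1)).
Let g x := kq_sub (f x) (kq_bracket normalizer x).

Lemma normalized_e1 : in_I (g e1).
Proof.
have [r1 r3 rB _ rG _] := der_leibniz df (x := e1) (y := e1) (z := e1) ltac:(kq_ring).
split; rewrite /g /kq_bracket /normalizer /= in r1 r3 rB rG *.
- coord r1.
- coord r3.
- coord rB.
- coord0.
- coord rG.
- coord0.
Qed.

Lemma normalized_e2 : in_I (g e2).
Proof.
have [r1 r3 rB _ _ rAG] := der_leibniz df (x := e2) (y := e2) (z := e2) ltac:(kq_ring).
have [_ _ _ s12A _ _] := der_leibniz0 df (x := e1) (y := e2) ltac:(kq_ring).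
have [_ _ _ _ s23G _] := der_leibniz0 df (x := e2) (y := e3) ltac:(kq_ring).
split; rewrite /g /kq_bracket /normalizer /= in r1 r3 rB rAG s12A s23G *.
- coord r1.
- coord r3.
- coord rB.
- coord s12A.
- coord s23G.
- coord rAG.
Qed.

Lemma normalized_e3 : in_I (g e3).
Proof.
have [r1 r3 rB rA _ _] := der_leibniz df (x := e3) (y := e3) (z := e3) ltac:(kq_ring).
have [_ _ _ _ _ s13AG] := der_leibniz0 df (x := e1) (y := e3) ltac:(kq_ring).
split; rewrite /g /kq_bracket /normalizer /= in r1 r3 rB rA s13AG *.
- coord r1.
- coord r3.
- coord rB.
- coord rA.
- coord0.
- coord s13AG.
Qed.

Lemma normalized_alpha : in_I (g alpha).
Proof.
have [_ a13 a1B _ a1G _] := der_leibniz df (x := e1) (y := alpha) (z := alpha) ltac:(kq_ring).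
have [a21 _ _ _ _ a2AG] := der_leibniz df (x := alpha) (y := e2) (z := alpha) ltac:(kq_ring).
have [_ _ _ _ s23G _] := der_leibniz0 df (x := e2) (y := e3) ltac:(kq_ring).
split; rewrite /g /kq_bracket /normalizer /= in a13 a1B a1G a21 a2AG s23G *.
- coord a21.
- coord a13.
- coord a1B.
- coord0.
- coord a1G.
- coord2 a2AG s23G.
Qed.

Lemma normalized_beta :
  in_I (kq_sub (g beta) (kq_poly_beta (kq_B (f beta)))).
Proof.
have [b11 b13 _ b1A _ b1AG] := der_leibniz df (x := e2) (y := beta) (z := beta) ltac:(kq_ring).
have [_ _ _ _ b2G _] := der_leibniz df (x := beta) (y := e2) (z := beta) ltac:(kq_ring).
have [_ _ _ s12A _ _] := der_leibniz0 df (x := e1) (y := e2) ltac:(kq_ring).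
have [_ _ _ _ s23G _] := der_leibniz0 df (x := e2) (y := e3) ltac:(kq_ring).
split; rewrite /g /kq_bracket /normalizer /= in b11 b13 b1A b1AG b2G s12A s23G *.
- coord b11.
- coord b13.
- coord0.
- coord2 b1A s12A.
- coord2 b2G s23G.
- coord b1AG.
Qed.

Lemma normalized_gamma :
  in_I (kq_sub (g gamma) (KQ 0 0 0 0 (kq_G (f gamma) + kq_A (f alpha)) 0)).
Proof.
have [c11 c13 _ c1A _ c1AG] := der_leibniz df (x := e2) (y := gamma) (z := gamma) ltac:(kq_ring).
have [_ _ c2B _ _ _] := der_leibniz df (x := gamma) (y := e3) (z := gamma) ltac:(kq_ring).
have [_ _ _ s12A _ _] := der_leibniz0 df (x := e1) (y := e2) ltac:(kq_ring).
split; rewrite /g /kq_bracket /normalizer /= in c11 c13 c1A c1AG c2B s12A *.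
- coord c11.
- coord c13.
- coord c2B.
- coord c1A.
- coord0.
- coord2 c1AG s12A.
Qed.

End Normalization.

(* [normalizer] reduces [f] to [f(beta) = b(beta)], [f(gamma) = h(beta) gamma];
   the remaining freedom is the inner derivation of [c (e1 + e2)], which sends
   [gamma] to [c gamma] and kills the other generators. *)
Lemma HH1_vanishes_of_stable_scalar : (n%:R : k) != 0 ->
  (forall h b, (forall v, V v -> V (h * v + b * v^`())) -> b`_0 = 0 ->
     exists c : k, zero_below n (h - c%:P) /\ zero_below n b) ->
  HH1_vanishes (I_nnV n V).
Proof.
move=> n_neq0 scalar f /derivation_mod_in_I df; set a := normalizer f.
have dg := derivation_sub_inner a df.
have e2_I := normalized_e2 df; have alpha_I := normalized_alpha df.
have beta_I := normalized_beta df; have gamma_I := normalized_gamma df.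
have [c [hc hb]] := scalar _ _ (der_V_stable dg e2_I alpha_I beta_I gamma_I)
  (der_beta_coef0 dg e2_I beta_I n_neq0).
set z := KQ c 0 c%:P 0 0 0; have dz := derivation_sub_inner z dg.
exists (kq_add a z) => x; apply/I_nnVP.
apply: in_I_eq (der_in_I_generators dz _ _ _ _ _ _ x); first by rewrite /kq_bracket; kq_ring.
- by apply: in_I_eq (normalized_e1 df); rewrite /kq_bracket; kq_ring.
- by apply: in_I_eq e2_I; rewrite /kq_bracket; kq_ring.
- by apply: in_I_eq (normalized_e3 df); rewrite /kq_bracket; kq_ring.
- by apply: in_I_eq alpha_I; rewrite /kq_bracket; kq_ring.
- apply: (in_I_eq (y := kq_add (kq_sub (kq_sub (f beta) (kq_bracket a beta))
    (kq_poly_beta (kq_B (f beta)))) (kq_poly_beta (kq_B (f beta))))).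
    by rewrite /kq_bracket; kq_ring.
  by apply: in_ID beta_I _; split; rewrite //=; exact: zero_below0 || exact: V0.
- apply: (in_I_eq (y := kq_add (kq_sub (kq_sub (f gamma) (kq_bracket a gamma))
    (KQ 0 0 0 0 (kq_G (f gamma) + kq_A (f alpha)) 0))
    (KQ 0 0 0 0 (kq_G (f gamma) + kq_A (f alpha) - c%:P) 0))).
    by rewrite /kq_bracket; kq_ring.
  by apply: in_ID gamma_I _; split; rewrite //=; exact: zero_below0 || exact: V0.
Qed.
End QuotientByI.

Unset Implicit Arguments.
Theorem mainTheorem18 (k : fieldType) (p : nat) (n d : nat)
  (V : {poly k} -> Prop) (nu : nat -> nat) (P : nat -> {poly k}) :
  p \in [pchar k] ->
  (2 <= n)%N -> (3 <= d)%N ->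
  V 0 -> (forall u v, V u -> V v -> V (u + v)) ->
  (forall (c : k) v, V v -> V (c *: v)) ->
  (forall w, V (w * 'X^n)) ->
  (forall i, (1 <= i <= d)%N ->
     (forall m, (m < nu i)%N -> (P i)`_m = 0) /\ (P i)`_(nu i) = 1) ->
  (forall i, (1 <= i <= d)%N -> V (P i)) ->
  (forall v, V v -> exists (c : nat -> k) (w : {poly k}),
      v = \sum_(1 <= i < d.+1) c i *: P i + w * 'X^n) ->
  (forall (c : nat -> k) (w : {poly k}),
      \sum_(1 <= i < d.+1) c i *: P i = w * 'X^n ->
      forall i, (1 <= i <= d)%N -> c i = 0) ->
  nu 1%N = 0%N -> nu 2%N = 1%N ->
  (forall i, (2 <= i < d)%N -> (nu i < nu i.+1)%N) ->
  (P 1%N)`_1 = 0 ->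
  nu d = 1 %[mod p] ->
  (P d)`_(nu d + 1) - (P 2%N)`_(nu 2%N + 1) != 0 ->
  (let L := (nu d + 1)%N
            :: [seq (nu d + nu j - 1)%N | j <- iota 3 (d - 2)]
            ++ [seq (nu d + nu j + 1)%N | j <- iota 2 (d - 1)] in
   uniq L /\ all (fun m => (m < n)%N) L) ->
  (n%:R : k) != 0 ->
  HH1_vanishes (I_nnV n V).
Proof.
move=> p_char _ d_ge3 _ Vadd Vscale VXn P_shape PV P_span _ nu1 nu2 nu_incr _
  nu_d_mod Pd_P2 [L_uniq L_lt] n_neq0.
apply: (HH1_vanishes_of_stable_scalar Vadd Vscale VXn n_neq0).
have d_ge2 := ltnW d_ge3.
have nu_d1 : (nu d)%:R = 1 :> k.
  rewrite -(GRing.natr_mod_pchar p_char) nu_d_mod modn_small //.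
  exact/prime_gt1/(GRing.pcharf_prime p_char).
rewrite nu2 addn1 subr_eq0 in Pd_P2.
exact: (stable_operator_scalar Vadd Vscale d_ge2 P_shape PV P_span nu1 nu2 nu_incr
  (exponent_list_bound d_ge2 L_lt) nu_d1 Pd_P2 (uniq_exponent_list_gap nu1 nu2 L_uniq)).
Qed.
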